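(* Assume no treatment anticipation, missingness as an absorbing state, random sampling, the selection model, and monotonicity. Assume also that $\mathbb{E}[S_{it}\mid G_i=g]>0$ for all $t,g$. If positive monotonicity holds ($S_{i2}(1)\ge S_{i2}(0)$ for all $i$), then $\pi_0=1$ and $$\pi_1=\frac{\mathbb{E}[S_{i2}(0)\mid G_i=1]}{\mathbb{E}[S_{i2}\mid G_i=1]}=\frac{\mathbb{E}[S_{i1}\mid G_i=1]}{\mathbb{E}[S_{i2}\mid G_i=1]}\cdot\frac{\mathbb{E}[S_{i2}\mid G_i=0]}{\mathbb{E}[S_{i1}\mid G_i=0]}\in[0,1].$$ If negative monotonicity holds ($S_{i2}(1)\le S_{i2}(0)$ for all $i$), then $\pi_1=1$ and $$\pi_0=\frac{\mathbb{E}[S_{i2}(1)\mid G_i=0]}{\mathbb{E}[S_{i2}\mid G_i=0]}=\frac{\mathbb{E}[S_{i1}\mid G_i=0]}{\mathbb{E}[S_{i2}\mid G_i=0]}\cdot\frac{\mathbb{E}[S_{i2}\mid G_i=1]}{\mathbb{E}[S_{i1}\mid G_i=1]}\in[0,1].$$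
   Context: Units $i$ are observed in periods $t\in\{1,2\}$. $G_i\in\{0,1\}$ indicates that unit $i$ is treated in period 2; nobody is treated in period 1. Period-2 potential selection indicators are $S_{i2}(1),S_{i2}(0)\in\{0,1\}$, where 1 means the outcome is observed. The observed indicator is $S_{i2}=G_iS_{i2}(1)+(1-G_i)S_{i2}(0)$. No anticipation: $S_{i1}$ does not depend on the period-2 treatment, so $S_{i1}(1)=S_{i1}(0)=S_{i1}$. Missingness is absorbing: $S_{i1}=0\Rightarrow S_{i2}=0$. Random sampling: $\{S_{i1},S_{i2},G_i\}$ are i.i.d. across units. Definitions: - $\pi_1=\Pr(S_{i2}(0)=1\mid G_i=1,S_{i2}(1)=1)$. - $\pi_0=\Pr(S_{i2}(1)=1\mid G_i=0,S_{i2}(0)=1)$. Selection model: $S_{it}(0)=h^0(U_{it},t)$ and $S_{it}(1)=h^1(U_{it},t)$, where: - $U_{it}$ is an unobserved scalar; - $h^w(u,t)$ is non-decreasing in $u$ for all $t\in\{1,2\}$ and $w\in\{0,1\}$; - $U$ is continuously distributed, with the same compact support in both groups; - the distribution of $U_{i1}$ given $G_i$ equals that of $U_{i2}$ given $G_i$; - $U_{it}$ is independent of $G_i$ given $S_{it}$, for each $t$. Monotonicity means that either positive monotonicity ($S_{i2}(1)\ge S_{i2}(0)$ for all $i$) or negative monotonicity ($S_{i2}(1)\le S_{i2}(0)$ for all $i$) holds. *)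

From mathcomp Require Import all_boot all_order all_algebra.
From mathcomp Require Import all_classical all_reals all_analysis.
Import Order.TTheory GRing.Theory Num.Theory.
Set Implicit Arguments. Unset Strict Implicit. Unset Printing Implicit Defensive.
Local Open Scope classical_set_scope.
Local Open Scope ring_scope.

Section Defs.
Context {d : measure_display} {T : measurableType d} {R : realType}.
Variable P : probability T R.

Definition prR (A : set T) : R := fine (P A).

Definition cprob (A B : set T) : R := prR (A `&` B) / prR B.

(* E[X | B] for a {0,1}-valued (indicator) random variable X *)
Definition cexp_ind (X : T -> bool) (B : set T) : R := cprob [set w | X w] B.

Definition grp (G : T -> bool) (g : bool) : set T := [set w | G w = g].

Definition cond_support (X : T -> R) (G : T -> bool) (g : bool) : set R :=
  [set u | forall e : R, 0 < e ->
     0 < prR ([set w | `|X w - u| < e] `&` grp G g)].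

Definition cond_indep (X : T -> R) (G S : T -> bool) : Prop :=
  forall (B : set R) (g s : bool), measurable B ->
    prR (X @^-1` B `&` grp G g `&` [set w | S w = s]) * prR [set w | S w = s]
    = prR (X @^-1` B `&` [set w | S w = s]) *
      prR (grp G g `&` [set w | S w = s]).
End Defs.

(* period-1 selection S_i1 = h^0(U_i1, 1) (= h^1(U_i1,1) by no anticipation) *)
Definition S1 {T R} (h0 : R -> nat -> bool) (U1 : T -> R) (w : T) : bool :=
  h0 (U1 w) 1%N.
Definition S2pot {T R} (h : R -> nat -> bool) (U2 : T -> R) (w : T) : bool :=
  h (U2 w) 2%N.
Definition S2obs {T R} (G : T -> bool) (h0 h1 : R -> nat -> bool)
  (U2 : T -> R) (w : T) : bool :=
  if G w then S2pot h1 U2 w else S2pot h0 U2 w.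

From mathcomp Require Import all_boot all_order all_algebra.
From mathcomp Require Import all_classical all_reals all_analysis.
From mathcomp Require Import measurable_realfun.
Import Order.TTheory GRing.Theory Num.Theory.
Import numFieldNormedType.Exports.
Local Open Scope classical_set_scope.
Local Open Scope ring_scope.

(* Selection is an upper set of values of U in each period, so the period-1
   rule a and a period-2 potential rule b lying below the observed S_2 are
   nested.  If b <= a, U_1 is independent of G given S_1 = 1 and
   U_2 | G ~ U_1 | G, so the share Pr(b(U_2) | G = g) / Pr(a(U_1) | G = g) is
   the same in both groups.  If a <= b, absorbing missingness squeezes
   {b(U_2)} between {a(U_1)} and {b(U_1)}, which are equally likely within
   each group, and the share is 1.  Taking for b the counterfactual rule that
   lies below the factual one gives the ratio formula for that group's pi,
   while the other group's pi conditions on a subevent of its own event. *)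

Definition upward_closed {disp : Order.disp_t} {X : porderType disp}
    (a : X -> bool) :=
  forall u v, (u <= v)%O -> a u -> a v.

Lemma upward_closed_total {disp : Order.disp_t} {X : orderType disp}
    {a b : X -> bool} :
  upward_closed a -> upward_closed b ->
  (forall u, b u -> a u) \/ (forall u, a u -> b u).
Proof.
move=> a_up b_up; have [ba|not_ba] := pselect (forall u, b u -> a u); first by left.
right; have [u /andP[bu /negbTE nau]] : exists u, b u && ~~ a u.
  apply: contra_notP not_ba => no_witness u bu; apply/negPn/negP => nau.
  by apply: no_witness; exists u; rewrite bu nau.
move=> v av; have [vu|uv] := leP v u.
- by rewrite (a_up _ _ vu av) in nau.
- exact: b_up _ _ (ltW uv) bu.
Qed.

Lemma measurable_upward_closed {R : realType} {a : R -> bool} :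
  upward_closed a -> measurable [set u | a u].
Proof.
move=> a_up; apply: is_interval_measurable => x y ax _ z /andP[xz _].
exact: a_up xz ax.
Qed.

Lemma measurable_upward_preimage {d : measure_display} {T : measurableType d}
    {R : realType} {f : T -> R} {a : R -> bool} :
  measurable_fun setT f -> upward_closed a -> measurable [set w | a (f w)].
Proof.
move=> mf a_up; have := mf measurableT _ (measurable_upward_closed a_up).
by rewrite setTI.
Qed.

Section ConditionalProbability.
Context {d : measure_display} {T : measurableType d} {R : realType}.
Variable P : probability T R.

Lemma prR_ge0 (A : set T) : 0 <= prR P A.
Proof. by rewrite /prR fine_ge0. Qed.

Lemma le_prR (A B : set T) :
  measurable A -> measurable B -> A `<=` B -> prR P A <= prR P B.
Proof.
move=> mA mB AB; apply: fine_le; rewrite ?fin_num_measure //.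
by apply: le_measure; rewrite ?inE.
Qed.

Lemma cprob_ge0 (A B : set T) : 0 <= cprob P A B.
Proof. by rewrite divr_ge0 ?prR_ge0. Qed.

Lemma cprob_le1 (A B : set T) :
  measurable A -> measurable B -> cprob P A B <= 1.
Proof.
move=> mA mB; rewrite /cprob; have [->|B_neq0] := eqVneq (prR P B) 0.
  by rewrite invr0 mulr0.
rewrite ler_pdivrMr ?mul1r ?lt_def ?B_neq0 ?prR_ge0 //.
by apply: le_prR => //; exact: measurableI.
Qed.

Lemma cprob_gt0 {A B : set T} :
  0 < cprob P A B -> 0 < prR P (A `&` B) /\ 0 < prR P B.
Proof.
rewrite /cprob => pos; split; rewrite lt_def prR_ge0 andbT; apply/eqP => eq0.
- by move: pos; rewrite eq0 mul0r ltxx.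
- by move: pos; rewrite eq0 invr0 mulr0 ltxx.
Qed.

Lemma cprob_eq1 (A B : set T) : B `<=` A -> prR P B != 0 -> cprob P A B = 1.
Proof. by move=> BA B_neq0; rewrite /cprob setIidr // divff. Qed.

Lemma cprobIr_div (A B C : set T) : A `<=` C -> prR P B != 0 ->
  cprob P A (B `&` C) = cprob P A B / cprob P C B.
Proof.
move=> AsubC B_neq0; have ABsubC : A `&` B `<=` C by move=> w [/AsubC].
rewrite /cprob setIA (setIidl ABsubC).
by rewrite invf_div mulrA divfK // [C `&` B]setIC.
Qed.

End ConditionalProbability.

Section ParallelSelection.
Context {d : measure_display} {T : measurableType d} {R : realType}.
Variables (P : probability T R) (G : T -> bool) (U1 U2 : T -> R).
Variables (a b : R -> bool).
Hypotheses (mG : forall g, measurable (grp G g)).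
Hypotheses (mU1 : measurable_fun setT U1) (mU2 : measurable_fun setT U2).
Hypotheses (a_up : upward_closed a) (b_up : upward_closed b).
Hypothesis U1_U2 : forall (B : set R) (g : bool), measurable B ->
  prR P (U1 @^-1` B `&` grp G g) = prR P (U2 @^-1` B `&` grp G g).
Hypothesis U1_indep : cond_indep P U1 G (fun w => a (U1 w)).

Let mA1 : measurable [set w | a (U1 w)] := measurable_upward_preimage mU1 a_up.
Let mB1 : measurable [set w | b (U1 w)] := measurable_upward_preimage mU1 b_up.
Let mB2 : measurable [set w | b (U2 w)] := measurable_upward_preimage mU2 b_up.

Let prR_b_U2 g :
  prR P ([set w | b (U2 w)] `&` grp G g) = prR P ([set w | b (U1 w)] `&` grp G g).
Proof. by rewrite (U1_U2 _ _ (measurable_upward_closed b_up)). Qed.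

Lemma prR_selection_parallel_sub g g' :
  (forall u, b u -> a u) -> 0 < prR P [set w | a (U1 w)] ->
  prR P ([set w | b (U2 w)] `&` grp G g) * prR P ([set w | a (U1 w)] `&` grp G g') =
  prR P ([set w | b (U2 w)] `&` grp G g') * prR P ([set w | a (U1 w)] `&` grp G g).
Proof.
move=> ba a_pos.
pose n := prR P (U1 @^-1` [set u | b u] `&` [set w | a (U1 w) = true]).
have share h : prR P ([set w | b (U2 w)] `&` grp G h) * prR P [set w | a (U1 w)] =
               n * prR P ([set w | a (U1 w)] `&` grp G h).
  have b_sub_a : U1 @^-1` [set u | b u] `&` grp G h `<=` [set w | a (U1 w) = true].
    by move=> w [/= bw _]; exact: ba.
  have := U1_indep _ h true (measurable_upward_closed b_up).
  by rewrite (setIidl b_sub_a) prR_b_U2 [grp G h `&` _]setIC.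
apply: (mulIf (lt0r_neq0 a_pos)).
by rewrite mulrAC share [RHS]mulrAC share mulrAC.
Qed.

Lemma prR_selection_absorbed g :
  (forall u, a u -> b u) -> (forall w, b (U2 w) -> a (U1 w)) ->
  prR P ([set w | b (U2 w)] `&` grp G g) = prR P ([set w | a (U1 w)] `&` grp G g).
Proof.
move=> ab absorbing; apply/eqP; rewrite eq_le; apply/andP; split.
- apply: le_prR; [exact: measurableI | exact: measurableI |].
  by move=> w [bw gw]; split => //; exact: absorbing.
- rewrite prR_b_U2; apply: le_prR; [exact: measurableI | exact: measurableI |].
  by move=> w [aw gw]; split => //; exact: ab.
Qed.

Lemma cexp_selection_parallel g g' :
  (forall w, b (U2 w) -> a (U1 w)) -> 0 < prR P [set w | a (U1 w)] ->
  cexp_ind P (fun w => b (U2 w)) (grp G g) * cexp_ind P (fun w => a (U1 w)) (grp G g') =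
  cexp_ind P (fun w => b (U2 w)) (grp G g') * cexp_ind P (fun w => a (U1 w)) (grp G g).
Proof.
move=> absorbing a_pos; rewrite /cexp_ind /cprob !mulf_div [prR P (grp G g') * _]mulrC.
congr (_ / _); have [ba|ab] := upward_closed_total a_up b_up.
- exact: prR_selection_parallel_sub.
- by rewrite !prR_selection_absorbed // mulrC.
Qed.

End ParallelSelection.

Section MonotoneSelection.
Context {d : measure_display} {T : measurableType d} {R : realType}.
Variables (P : probability T R) (G : T -> bool) (g : bool).
(* own is the potential period-2 selection under group g's treatment status,
   cf the counterfactual one, which is the factual one of group ~~ g. *)
Variables (s1 s2 own cf : T -> bool).
Hypotheses (mGg : measurable (grp G g)).
Hypotheses (m_own : measurable [set w | own w]) (m_cf : measurable [set w | cf w]).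
Hypothesis s2_own : [set w | s2 w] `&` grp G g = [set w | own w] `&` grp G g.
Hypothesis s2_cf : [set w | s2 w] `&` grp G (~~ g) = [set w | cf w] `&` grp G (~~ g).
Hypothesis cf_own : forall w, cf w -> own w.
Hypothesis cf_parallel :
  cexp_ind P cf (grp G g) * cexp_ind P s1 (grp G (~~ g)) =
  cexp_ind P cf (grp G (~~ g)) * cexp_ind P s1 (grp G g).
Hypotheses (s1_pos : 0 < cexp_ind P s1 (grp G (~~ g)))
           (s2_pos : 0 < cexp_ind P s2 (grp G g))
           (s2_pos' : 0 < cexp_ind P s2 (grp G (~~ g))).

Lemma cprob_own_cf : cprob P [set w | own w] (grp G (~~ g) `&` [set w | cf w]) = 1.
Proof.
have [cf_pos _] := cprob_gt0 P s2_pos'; rewrite s2_cf setIC in cf_pos.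
by apply: cprob_eq1; [move=> w [_ /cf_own] | exact: lt0r_neq0].
Qed.

Lemma cprob_cf_own :
  cprob P [set w | cf w] (grp G g `&` [set w | own w]) =
  cexp_ind P cf (grp G g) / cexp_ind P s2 (grp G g).
Proof.
have [_ Gg_pos] := cprob_gt0 P s2_pos.
rewrite cprobIr_div; [| by move=> w /cf_own | exact: lt0r_neq0].
by rewrite /cexp_ind /cprob s2_own.
Qed.

Lemma cexp_cf_ratio :
  cexp_ind P cf (grp G g) / cexp_ind P s2 (grp G g) =
  (cexp_ind P s1 (grp G g) / cexp_ind P s2 (grp G g)) *
  (cexp_ind P s2 (grp G (~~ g)) / cexp_ind P s1 (grp G (~~ g))).
Proof.
have -> : cexp_ind P s2 (grp G (~~ g)) = cexp_ind P cf (grp G (~~ g)).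
  by rewrite /cexp_ind /cprob s2_cf.
apply: (mulIf (lt0r_neq0 s1_pos)); rewrite mulrAC cf_parallel.
by rewrite -[RHS]mulrA divfK ?lt0r_neq0 // [RHS]mulrAC [X in X / _]mulrC.
Qed.

Lemma monotone_selection :
  [/\ cprob P [set w | own w] (grp G (~~ g) `&` [set w | cf w]) = 1,
      cprob P [set w | cf w] (grp G g `&` [set w | own w]) =
        cexp_ind P cf (grp G g) / cexp_ind P s2 (grp G g),
      cexp_ind P cf (grp G g) / cexp_ind P s2 (grp G g) =
        (cexp_ind P s1 (grp G g) / cexp_ind P s2 (grp G g)) *
        (cexp_ind P s2 (grp G (~~ g)) / cexp_ind P s1 (grp G (~~ g))) &
      0 <= cprob P [set w | cf w] (grp G g `&` [set w | own w]) <= 1].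
Proof.
split; [exact: cprob_own_cf | exact: cprob_cf_own | exact: cexp_cf_ratio |].
by rewrite cprob_ge0 cprob_le1 //; exact: measurableI.
Qed.

End MonotoneSelection.

Theorem proposition3 (d : measure_display) (T : measurableType d) (R : realType)
  (P : probability T R) (G : T -> bool) (U1 U2 : T -> R)
  (h0 h1 : R -> nat -> bool) :
  (* measurability of the treatment indicator and of the latent U_it *)
  (forall g, measurable (grp G g)) ->
  measurable_fun setT U1 -> measurable_fun setT U2 ->
  (* selection model: h^w(u,t) non-decreasing in u *)
  (forall t u v, u <= v -> h0 u t -> h0 v t) ->
  (forall t u v, u <= v -> h1 u t -> h1 v t) ->
  (* U continuously distributed (no atoms) *)
  (forall u, prR P (U1 @^-1` [set u]) = 0) ->
  (forall u, prR P (U2 @^-1` [set u]) = 0) ->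
  (* same compact support in both groups *)
  cond_support P U1 G true = cond_support P U1 G false ->
  compact (cond_support P U1 G true) ->
  cond_support P U2 G true = cond_support P U2 G false ->
  compact (cond_support P U2 G true) ->
  (* U_i1 | G has the same distribution as U_i2 | G *)
  (forall (B : set R) (g : bool), measurable B ->
     prR P (U1 @^-1` B `&` grp G g) = prR P (U2 @^-1` B `&` grp G g)) ->
  (* U_it independent of G given S_it *)
  cond_indep P U1 G (S1 h0 U1) ->
  cond_indep P U2 G (S2obs G h0 h1 U2) ->
  (* no anticipation: S_i1(1) = S_i1(0) *)
  (forall w, h1 (U1 w) 1%N = h0 (U1 w) 1%N) ->
  (* missingness is absorbing *)
  (forall w, ~~ S1 h0 U1 w -> ~~ S2obs G h0 h1 U2 w) ->
  (* monotonicity *)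
  ((forall w, S2pot h0 U2 w -> S2pot h1 U2 w) \/
   (forall w, S2pot h1 U2 w -> S2pot h0 U2 w)) ->
  (* E[S_it | G = g] > 0 *)
  (forall g, 0 < cexp_ind P (S1 h0 U1) (grp G g) /\
             0 < cexp_ind P (S2obs G h0 h1 U2) (grp G g)) ->
  let pi1 := cprob P [set w | S2pot h0 U2 w]
               (grp G true `&` [set w | S2pot h1 U2 w]) in
  let pi0 := cprob P [set w | S2pot h1 U2 w]
               (grp G false `&` [set w | S2pot h0 U2 w]) in
  ((forall w, S2pot h0 U2 w -> S2pot h1 U2 w) ->
     pi0 = 1 /\
     pi1 = cexp_ind P (S2pot h0 U2) (grp G true) /
           cexp_ind P (S2obs G h0 h1 U2) (grp G true) /\
     cexp_ind P (S2pot h0 U2) (grp G true) /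
       cexp_ind P (S2obs G h0 h1 U2) (grp G true)
     = (cexp_ind P (S1 h0 U1) (grp G true) /
        cexp_ind P (S2obs G h0 h1 U2) (grp G true)) *
       (cexp_ind P (S2obs G h0 h1 U2) (grp G false) /
        cexp_ind P (S1 h0 U1) (grp G false)) /\
     0 <= pi1 <= 1) /\
  ((forall w, S2pot h1 U2 w -> S2pot h0 U2 w) ->
     pi1 = 1 /\
     pi0 = cexp_ind P (S2pot h1 U2) (grp G false) /
           cexp_ind P (S2obs G h0 h1 U2) (grp G false) /\
     cexp_ind P (S2pot h1 U2) (grp G false) /
       cexp_ind P (S2obs G h0 h1 U2) (grp G false)
     = (cexp_ind P (S1 h0 U1) (grp G false) /
        cexp_ind P (S2obs G h0 h1 U2) (grp G false)) *
       (cexp_ind P (S2obs G h0 h1 U2) (grp G true) /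
        cexp_ind P (S1 h0 U1) (grp G true)) /\
     0 <= pi0 <= 1).

Proof.
move=> mG mU1 mU2 h0_up h1_up _ _ _ _ _ _ U1_U2 U1_indep _ _ absorbing _ pos.
move=> pi1 pi0.
have mS2 h : (forall t, upward_closed (h^~ t)) -> measurable [set w | S2pot h U2 w].
  by move=> h_up; exact: measurable_upward_preimage mU2 (h_up 2%N).
have S2obs_grp g : [set w | S2obs G h0 h1 U2 w] `&` grp G g =
                   [set w | S2pot (if g then h1 else h0) U2 w] `&` grp G g.
  by case: g; apply/seteqP; split => w /= [Sw Gw]; split => //; move: Sw;
    rewrite /S2obs Gw.
have S1_pos : 0 < prR P [set w | S1 h0 U1 w].
  have [S1G_pos _] := cprob_gt0 P (proj1 (pos true)).
  have mS1 := measurable_upward_preimage mU1 (h0_up 1%N).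
  apply: lt_le_trans S1G_pos _.
  by apply: le_prR => //; exact: measurableI mS1 (mG true).
have parallel h : (forall t, upward_closed (h^~ t)) ->
    (forall w, S2pot h U2 w -> S2obs G h0 h1 U2 w) -> forall g,
    cexp_ind P (S2pot h U2) (grp G g) * cexp_ind P (S1 h0 U1) (grp G (~~ g)) =
    cexp_ind P (S2pot h U2) (grp G (~~ g)) * cexp_ind P (S1 h0 U1) (grp G g).
  move=> h_up below g.
  apply: (cexp_selection_parallel P G U1 U2 (h0^~ 1%N) (h^~ 2%N) mG mU1 mU2
    (h0_up 1%N) (h_up 2%N) U1_U2 U1_indep) => //.
  by move=> w Sw; exact: contraTT (absorbing w) (below w Sw).
split => mono.
- have below w : S2pot h0 U2 w -> S2obs G h0 h1 U2 w.
    by rewrite /S2obs; case: (G w) => // /mono.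
  have [] := monotone_selection P G true (S1 h0 U1) (S2obs G h0 h1 U2)
    (S2pot h1 U2) (S2pot h0 U2) (mG true) (mS2 _ h1_up) (mS2 _ h0_up)
    (S2obs_grp true) (S2obs_grp false) mono (parallel _ h0_up below true)
    (proj1 (pos false)) (proj2 (pos true)) (proj2 (pos false)).
  by do !split.
- have below w : S2pot h1 U2 w -> S2obs G h0 h1 U2 w.
    by rewrite /S2obs; case: (G w) => // /mono.
  have [] := monotone_selection P G false (S1 h0 U1) (S2obs G h0 h1 U2)
    (S2pot h0 U2) (S2pot h1 U2) (mG false) (mS2 _ h0_up) (mS2 _ h1_up)
    (S2obs_grp false) (S2obs_grp true) mono (parallel _ h1_up below false)
    (proj1 (pos true)) (proj2 (pos false)) (proj2 (pos true)).
  by do !split.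
Qed.
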